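(* Let $\mathcal G=(V_{\min},V_{\max},E,w,\lambda)$ be a discounted payoff game and $\{\alpha_e>0\mid e\in E\}$ positive numbers such that $\mathcal G$ is improving with respect to the adjusted objectives $f'_\sigma$. Let $\sigma$ be a joint strategy and $\nu$ a basis valuation of $H$ minimising $f'_\sigma$ over all solutions of $H$, with $f'_\sigma(\nu)\neq0$, and assume there are no local improvements of $\sigma$ for $\nu$, i.e. $\mathsf{offset}'(\nu,(v,v'))\ge\mathsf{offset}'(\nu,(v,\sigma(v)))$ for all $(v,v')\in E$. Let $E'$ be a given set of edges with $E_\nu\subseteq E'\subseteq S^\sigma_\nu$ containing an outgoing edge of every vertex. Then there exist a neighbouring valuation $\nu''$ of $\nu$ and a joint strategy $\sigma'$ with $f'_{\sigma'}(\nu'')<f'_\sigma(\nu)$; such a $\sigma'$ is better than $\sigma$ (with respect to the adjusted objectives), and it can be chosen such that $(v,\sigma'(v))\in E'$ for all $v\in V$.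
   Context: A discounted payoff game is a tuple $\mathcal G=(V_{\min},V_{\max},E,w,\lambda)$ with $V=V_{\min}\cup V_{\max}$ finite (disjoint union of Min and Max vertices), $E\subseteq V\times V$ with every vertex having an outgoing edge, $w:E\to\mathbb R$, $\lambda:E\to[0,1)$. A joint strategy is a map $\sigma:V\to V$ with $(v,\sigma(v))\in E$. $H$ is the system of inequations over $x\in\mathbb R^V$ containing, for each edge $e=(v,v')$, $x(v)\ge w_e+\lambda_e x(v')$ if $v\in V_{\max}$ and $x(v)\le w_e+\lambda_e x(v')$ if $v\in V_{\min}$. A basis of $H$ is a set of $|V|$ inequations of $H$ whose equality versions have a unique common solution; if it satisfies $H$ it is the basis valuation of that basis. $\mathsf{offset}(x,(v,v'))=x(v)-(w_{(v,v')}+\lambda_{(v,v')}x(v'))$ if $v\in V_{\max}$, and $(w_{(v,v')}+\lambda_{(v,v')}x(v'))-x(v)$ otherwise; the adjusted offset is $\mathsf{offset}'(x,e)=\alpha_e\,\mathsf{offset}(x,e)$ and the adjusted objective is $f'_\sigma(x)=\sum_{v\in V}\mathsf{offset}'(x,(v,\sigma(v)))$. $S^\sigma_\nu=\{(v,v')\in E\mid\mathsf{offset}'(\nu,(v,v'))=\mathsf{offset}'(\nu,(v,\sigma(v)))\}$ and $E_\nu=\{(v,v')\in E\mid\mathsf{offset}(\nu,(v,v'))=0\}$. $\sigma'$ is better than $\sigma$ iff $\min\{f'_{\sigma'}(x)\mid x\text{ solves }H\}<\min\{f'_\sigma(x)\mid x\text{ solves }H\}$. The game is sharp if every basis valuation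 satisfies exactly $|V|$ inequations of $H$ with equality. A sharp game is improving (with respect to $f'$) if for every joint strategy $\sigma$ and every basis valuation $\nu$ not minimising $f'_\sigma$ over the solutions of $H$, there is a basis obtained from the basis of $\nu$ by exchanging exactly one inequation whose basis valuation $\nu'$ satisfies $f'_\sigma(\nu')<f'_\sigma(\nu)$. A neighbouring valuation of $\nu$ is the basis valuation of a basis obtained from the basis of $\nu$ by exchanging exactly one inequation. *)

From mathcomp Require Import all_boot all_order all_algebra.
Set Implicit Arguments. Unset Strict Implicit. Unset Printing Implicit Defensive.
Import Order.TTheory GRing.Theory Num.Theory.
Local Open Scope ring_scope.

Section DPG.
Variables (R : realFieldType) (V : finType).
(* vmax v = true iff v is a Max vertex (V_max); V_min is the complement. *)
Variable vmax : pred V.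
Variable edge : rel V.
Variables (w lam alpha : V -> V -> R).

Definition edges : {set V * V} := [set e | edge e.1 e.2].

Definition offset (x : V -> R) (e : V * V) : R :=
  if vmax e.1 then x e.1 - (w e.1 e.2 + lam e.1 e.2 * x e.2)
  else (w e.1 e.2 + lam e.1 e.2 * x e.2) - x e.1.

Definition offset' (x : V -> R) (e : V * V) : R := alpha e.1 e.2 * offset x e.

Definition solvesH (x : V -> R) : Prop := forall e, e \in edges -> 0 <= offset x e.

Definition joint (s : V -> V) : Prop := forall v, edge v (s v).

Definition fobj (s : V -> V) (x : V -> R) : R := \sum_(v : V) offset' x (v, s v).

Definition eqsys (B : {set V * V}) (x : V -> R) : Prop :=
  forall e, e \in B -> offset x e = 0.
Definition is_basis (B : {set V * V}) : Prop :=
  [/\ B \subset edges, #|B| = #|V|,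
      exists x, eqsys B x &
      forall x y, eqsys B x -> eqsys B y -> x =1 y].

Definition basis_val (B : {set V * V}) (nu : V -> R) : Prop :=
  [/\ is_basis B, eqsys B nu & solvesH nu].

Definition is_basis_valuation (nu : V -> R) : Prop := exists B, basis_val B nu.

Definition exchange1 (B B' : {set V * V}) : Prop :=
  exists e e', [/\ e \in B, e' \in edges, e' \notin B & B' = e' |: (B :\ e)].

Definition neighbour (nu nu' : V -> R) : Prop :=
  exists B B', [/\ basis_val B nu, exchange1 B B' & basis_val B' nu'].

Definition minimises (f : (V -> R) -> R) (x : V -> R) : Prop :=
  solvesH x /\ forall y, solvesH y -> f x <= f y.

Definition better (s' s : V -> V) : Prop :=
  exists x y, [/\ minimises (fobj s') x, minimises (fobj s) y &
                  fobj s' x < fobj s y].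

Definition sharp : Prop :=
  forall nu, is_basis_valuation nu ->
    #|[set e in edges | offset nu e == 0]| = #|V|.

Definition improving : Prop :=
  sharp /\
  forall s, joint s -> forall nu, is_basis_valuation nu ->
    ~ minimises (fobj s) nu ->
    exists B B' nu', [/\ basis_val B nu, exchange1 B B', basis_val B' nu' &
                         fobj s nu' < fobj s nu].

Definition Sset (s : V -> V) (nu : V -> R) : {set V * V} :=
  [set e in edges | offset' nu e == offset' nu (e.1, s e.1)].
Definition Enu (nu : V -> R) : {set V * V} :=
  [set e in edges | offset nu e == 0].

End DPG.

(* Let T be the set of vertices whose sigma-edge is tight at nu.  As adjusted
   offsets are constant on E' (a subset of S^sigma_nu) and the alpha_e are
   positive, the tight edges of nu are exactly the E'-edges leaving T, and some
   vertex lies outside T because f'_sigma(nu) <> 0.  Solving the zero-weight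
   discounted game on T, with suitable exit values in [0, 1], gives a direction
   D whose slope is nonnegative on the E'-edges leaving T (and zero on one per
   vertex), nonpositive on the E'-edges leaving the other vertices and negative
   on all E'-edges of one of them.  The strategy tau following these E'-edges
   has f'_tau(nu) = f'_sigma(nu), while f'_tau strictly decreases along
   nu + tD, which stays in H for small t > 0.  So nu does not minimise f'_tau,
   and the improving property yields nu''.  Descent among the finitely many
   basis valuations terminates, so f'_tau attains its minimum and tau is better
   than sigma. *)

From Pilot Require Import Defs.
From mathcomp Require Import all_boot all_order all_algebra.
From mathcomp Require Import boolp lra ring.
Set Implicit Arguments. Unset Strict Implicit. Unset Printing Implicit Defensive.
Import Order.TTheory GRing.Theory Num.Theory.
Local Open Scope ring_scope.

Lemma fin_pos_lower_bound (R : realDomainType) (X : finType) (P : pred X) (c : X -> R) :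
  (forall x, P x -> 0 < c x) -> exists2 t, 0 < t & forall x, P x -> t <= c x.
Proof.
move=> c_gt0; have [x0 Px0|P0] := pickP P; last by exists 1 => // x; rewrite P0.
by case: (arg_minP c Px0) => x Px min_x; exists (c x); [exact: c_gt0|].
Qed.

Section BellmanFixpoint.
Variables (R : realFieldType) (V : finType) (p : pred V) (A : rel V)
  (lam : V -> V -> R).
Hypothesis lam_ge0 : forall v t, A v t -> 0 <= lam v t.
Hypothesis lam_le1 : forall v t, A v t -> lam v t <= 1.
Hypothesis A_out : forall v, exists t, A v t.

(* Bellman equations of the zero-weight game on [F] where [p]-vertices maximise,
   the others minimise, and leaving [F] at [t] pays [d0 t]. *)
Definition bellman_sol (F : {set V}) (d0 d : V -> R) : Prop :=
  [/\ forall v, v \notin F -> d v = d0 v,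
      forall v t, v \in F -> A v t ->
        if p v then lam v t * d t <= d v else d v <= lam v t * d t &
      forall v, v \in F -> exists2 t, A v t & d v = lam v t * d t].

(* Dijkstra's argument: an exit [(v, t)] is eligible if [v] maximises, or if
   all moves of [v] leave [F] and [t] is its best one; the largest eligible exit
   value is the value of its source, which can then be removed from [F].
   [exit_bounded] is the invariant that makes this induction work. *)
Definition eligible (F : {set V}) (d0 : V -> R) (v t : V) : bool :=
  [&& v \in F, A v t, t \notin F & p v ||
    [forall t', A v t' ==> (t' \notin F) && (lam v t * d0 t <= lam v t' * d0 t')]].

Definition unit_valued (d : V -> R) := forall v, 0 <= d v <= 1.

Definition exit_bounded (F : {set V}) (d0 d : V -> R) : Prop :=
  forall b, 0 <= b -> (forall v t, eligible F d0 v t -> lam v t * d0 t <= b) ->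
  forall v, v \in F -> d v <= b.

Lemma bellman_sol_no_eligible F d0 :
  unit_valued d0 -> (forall v t, ~~ eligible F d0 v t) ->
  exists d, [/\ bellman_sol F d0 d, unit_valued d & exit_bounded F d0 d].
Proof.
move=> d0_01 no_el; exists (fun v => if v \in F then 0 else d0 v).
split=> [|v|b b0 _ v ->//]; last by case: ifP => _; rewrite ?lexx ?ler01.
split=> [v /negbTE -> // | v t vF Avt | v vF]; rewrite vF.
  have [tF|tF] := boolP (t \in F); first by rewrite mulr0; case: (p v).
  have [pv|_] := boolP (p v).
    by have := no_el v t; rewrite /eligible vF Avt tF pv.
  by have /andP[d0t _] := d0_01 t; rewrite mulr_ge0 ?lam_ge0.
have [t /andP[Avt tF]|succ_out] := pickP [pred t | A v t & t \in F].
  by exists t => //; rewrite tF mulr0.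
have [t0 At0] := A_out v.
case: (arg_minP (fun t => lam v t * d0 t) At0) => t Avt min_t.
have tF : t \notin F by have := succ_out t; rewrite /= Avt => /negbT.
have := no_el v t; rewrite /eligible vF Avt tF /=.
case/negP; apply/orP; right; apply/forallP => t'; apply/implyP => Avt'.
rewrite min_t // andbT.
by have := succ_out t'; rewrite /= Avt' => /negbT.
Qed.

Lemma exit_value_unit F d0 v t :
  unit_valued d0 -> eligible F d0 v t -> 0 <= lam v t * d0 t <= 1.
Proof.
move=> d0_01 /and4P[_ Avt _ _]; have /andP[d0t0 d0t1] := d0_01 t.
by rewrite mulr_ge0 ?lam_ge0 // mulr_ile1 ?lam_ge0 ?lam_le1.
Qed.

Section Step.
Variables (F : {set V}) (d0 : V -> R) (vs ts : V).
Hypothesis d0_01 : unit_valued d0.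
Let P := lam vs ts * d0 ts.
Let d0' v := if v == vs then P else d0 v.
Hypothesis el_s : eligible F d0 vs ts.
Hypothesis max_s : forall v t, eligible F d0 v t -> lam v t * d0 t <= P.

Let P_ge0 : 0 <= P.
Proof. by case/andP: (exit_value_unit d0_01 el_s). Qed.

Lemma eligible_setD1_le v t : eligible (F :\ vs) d0' v t -> lam v t * d0' t <= P.
Proof.
case/and4P=> /setD1P[vvs vF] +; rewrite in_setD1 negb_and negbK /d0'.
have [-> Avs _ _|tvs Avt /= tF min_t] := eqVneq t vs; first by rewrite ler_piMl ?lam_le1.
case/orP: min_t => [pv|/forallP min_t].
  by apply: max_s; rewrite /eligible vF Avt tF pv.
have [Avvs|nAvvs] := boolP (A v vs).
  have /implyP/(_ Avvs)/andP[_] := min_t vs; rewrite eqxx => le_P.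
  by apply: le_trans le_P _; rewrite ler_piMl ?lam_le1.
apply: max_s; rewrite /eligible vF Avt tF /=; apply/orP; right; apply/forallP => t'.
apply/implyP => Avt'; have /implyP/(_ Avt') := min_t t'.
have t'vs : t' != vs by apply: contraNneq nAvvs => <-.
by rewrite in_setD1 (negbTE t'vs).
Qed.

Lemma bellman_sol_step d :
  bellman_sol (F :\ vs) d0' d -> unit_valued d ->
  (forall v, v \in F :\ vs -> d v <= P) -> bellman_sol F d0 d.
Proof.
case=> d_out' d_ineq' d_eq' d_01 d_le_P.
case/and4P: el_s => vsF Ats tsF choice_s.
have d_vs : d vs = P by rewrite d_out' ?setD11 // /d0' eqxx.
have d_out v : v \notin F -> d v = d0 v.
  move=> vF; have vvs : v != vs by apply: contraNneq vF => ->.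
  by rewrite d_out' ?in_setD1 ?(negbTE vF) ?andbF // /d0' (negbTE vvs).
split=> // [v t vF|v vF]; last first.
  have [->|vvs] := eqVneq v vs; last by apply: d_eq'; rewrite in_setD1 vvs.
  by exists ts; rewrite // d_vs d_out.
have [-> Avt|vvs] := eqVneq v vs; last by apply: d_ineq'; rewrite in_setD1 vvs.
rewrite d_vs; case: ifP => pvs; last first.
  move: choice_s; rewrite pvs /= => /forallP/(_ t)/implyP/(_ Avt)/andP[tF le_t].
  by rewrite d_out.
have [tF|tF] := boolP (t \in F); last first.
  by rewrite d_out //; apply: max_s; rewrite /eligible vsF Avt tF pvs.
apply: le_trans (_ : d t <= P).
  by case/andP: (d_01 t) => ? _; rewrite ler_piMl ?lam_le1.
by have [->|tvs] := eqVneq t vs; [rewrite d_vs | apply: d_le_P; rewrite in_setD1 tvs].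
Qed.

End Step.

Lemma bellman_sol_exists_bounded n (F : {set V}) (d0 : V -> R) :
  (#|F| <= n)%N -> unit_valued d0 ->
  exists d, [/\ bellman_sol F d0 d, unit_valued d & exit_bounded F d0 d].
Proof.
elim: n F d0 => [|n IH] F d0 leFn d0_01.
  apply: bellman_sol_no_eligible => // v t; apply/negP => /and4P[vF _ _ _].
  by move: leFn; rewrite leqn0 cards_eq0 => /eqP F0; rewrite F0 inE in vF.
have [[v0 t0] el0|no_el] := pickP (fun e : V * V => eligible F d0 e.1 e.2); last first.
  by apply: bellman_sol_no_eligible => // v t; rewrite (no_el (v, t)).
case: (@arg_maxP _ _ _ (v0, t0) [pred e : V * V | eligible F d0 e.1 e.2]
  (fun e => lam e.1 e.2 * d0 e.2) el0) => -[vs ts] /= el_s max_s.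
have /andP[P0 P1] := exit_value_unit d0_01 el_s.
set P := lam vs ts * d0 ts in P0 P1 max_s.
have [||d [sol' d_01 d_bnd]] := IH (F :\ vs) (fun v => if v == vs then P else d0 v).
- by move: leFn; case/and4P: el_s => vsF _ _ _; rewrite (cardsD1 vs F) vsF.
- by move=> v; case: eqP => _; rewrite ?P0 ?P1.
have max_s' v t : eligible F d0 v t -> lam v t * d0 t <= P := max_s (v, t).
have d_le_P : forall v, v \in F :\ vs -> d v <= P.
  by apply: d_bnd => // v t; apply: (eligible_setD1_le d0_01 el_s max_s').
exists d; split=> //; first exact: (bellman_sol_step el_s max_s' sol' d_01 d_le_P).
move=> b b0 le_b v vF; apply: le_trans (le_b _ _ el_s).
have [->|vvs] := eqVneq v vs; last by apply: d_le_P; rewrite in_setD1 vvs.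
by case: sol' => -> //; rewrite ?setD11 // eqxx.
Qed.

Lemma bellman_sol_exists F d0 :
  unit_valued d0 -> exists2 d, bellman_sol F d0 d & unit_valued d.
Proof.
move=> d0_01; have [d []] := bellman_sol_exists_bounded (leqnn #|F|) d0_01.
by exists d.
Qed.

End BellmanFixpoint.

Definition slope (R : pzRingType) (V : Type) (vmax : pred V) (lam : V -> V -> R)
    (D : V -> R) (e : V * V) : R :=
  if vmax e.1 then D e.1 - lam e.1 e.2 * D e.2 else lam e.1 e.2 * D e.2 - D e.1.

Lemma slopeN (R : pzRingType) (V : Type) (vmax : pred V) lam (D : V -> R) e :
  slope vmax lam (fun v => - D v) e = slope (predC vmax) lam D e.
Proof. by rewrite /slope /=; case: (vmax e.1); rewrite mulrN opprK addrC. Qed.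

Section Direction.
Variables (R : realFieldType) (V : finType) (vmax : pred V) (A : rel V)
  (lam : V -> V -> R).
Hypothesis lam_unit : forall v t, A v t -> 0 <= lam v t < 1.
Hypothesis A_out : forall v, exists t, A v t.

Let lam_ge0 v t (Avt : A v t) : 0 <= lam v t.
Proof. by case/andP: (lam_unit Avt). Qed.

Let lam_le1 v t (Avt : A v t) : lam v t <= 1.
Proof. by case/andP: (lam_unit Avt) => _ /ltW. Qed.

Let discount_unit d u t : unit_valued d -> A u t -> 0 <= lam u t * d t < 1.
Proof.
move=> d_01 Aut; have /andP[l0 l1] := lam_unit Aut; have /andP[dt0 dt1] := d_01 t.
by rewrite mulr_ge0 //; apply: le_lt_trans l1; rewrite ler_piMr.
Qed.

Lemma bellman_sol_slope p T d0 d : bellman_sol p A lam T d0 d ->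
  (forall v t, v \in T -> A v t -> 0 <= slope p lam d (v, t)) /\
  (forall v, v \in T -> exists2 t, A v t & slope p lam d (v, t) = 0).
Proof.
case=> _ d_ineq d_eq; split=> [v t vT Avt | v vT].
  by have := d_ineq v t vT Avt; rewrite /slope /=; case: (p v); rewrite subr_ge0.
have [t Avt dv] := d_eq v vT; exists t => //.
by rewrite /slope /= dv; case: (p v); rewrite subrr.
Qed.

Lemma descent_direction (T : {set V}) : (exists u, u \notin T) ->
  exists D : V -> R,
   [/\ forall v t, v \in T -> A v t -> 0 <= slope vmax lam D (v, t),
       forall v, v \in T -> exists2 t, A v t & slope vmax lam D (v, t) = 0,
       forall u t, u \notin T -> A u t -> slope vmax lam D (u, t) <= 0 &
       exists2 u, u \notin T & forall t, A u t -> slope vmax lam D (u, t) < 0].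
Proof.
move=> [u1 u1T].
have [u0 /andP[u0T u0min]|all_max] := pickP [pred u | (u \notin T) && ~~ vmax u].
  (* Exits to Min vertices pay 1 > lam * d t; otherwise all vertices outside
     [T] are Max and the dual game with exit payoff 1 is used, with [D = - d]. *)
  pose d0 u : R := if vmax u then 0 else 1.
  have [|d sol d_01] := bellman_sol_exists vmax lam_ge0 lam_le1 A_out T (d0 := d0).
    by move=> u; rewrite /d0; case: (vmax u); rewrite ?lexx ?ler01.
  have [pos zero] := bellman_sol_slope sol; case: sol => d_out _ _.
  have slope_out u t : u \notin T -> slope vmax lam d (u, t) =
      if vmax u then - (lam u t * d t) else lam u t * d t - 1.
    by move=> uT; rewrite /slope /= d_out // /d0; case: (vmax u); rewrite ?sub0r.
  exists d; split=> //.
  - move=> u t uT Aut; case/andP: (discount_unit d_01 Aut) => ? /ltW ?.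
    by rewrite slope_out //; case: (vmax u); rewrite ?oppr_le0 ?subr_le0.
  - exists u0 => // t Au0t; rewrite slope_out // (negbTE u0min) subr_lt0.
    by case/andP: (discount_unit d_01 Au0t).
have [|d sol d_01] :=
  bellman_sol_exists (predC vmax) lam_ge0 lam_le1 A_out T (d0 := fun=> 1).
  by move=> u; rewrite lexx ler01.
have [pos zero] := bellman_sol_slope sol; case: sol => d_out _ _.
have slope_out u t :
    u \notin T -> slope vmax lam (fun v => - d v) (u, t) = lam u t * d t - 1.
  move=> uT; have := all_max u; rewrite /slope /= d_out // uT /= => /negbFE ->.
  by rewrite mulrN opprK addrC.
exists (fun v => - d v); split.
- by move=> v t vT Avt; rewrite slopeN; apply: pos.
- by move=> v vT; have [t Avt zero_t] := zero v vT; exists t; rewrite ?slopeN.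
- move=> u t uT Aut; rewrite slope_out // subr_le0.
  by case/andP: (discount_unit d_01 Aut) => _ /ltW.
- exists u1 => // t Au1t; rewrite slope_out // subr_lt0.
  by case/andP: (discount_unit d_01 Au1t).
Qed.

Lemma descent_strategy (T : {set V}) (c : V -> V -> R) (D : V -> R) :
  (forall v t, A v t -> 0 < c v t) ->
  (forall v, v \in T -> exists2 t, A v t & slope vmax lam D (v, t) = 0) ->
  (forall u t, u \notin T -> A u t -> slope vmax lam D (u, t) <= 0) ->
  (exists2 u, u \notin T & forall t, A u t -> slope vmax lam D (u, t) < 0) ->
  exists2 tau : V -> V, (forall v, A v (tau v)) &
    \sum_v c v (tau v) * slope vmax lam D (v, tau v) < 0.
Proof.
move=> c_gt0 D_T0 D_out [u0 u0T D_u0].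
have /fin_all_exists[tau tau_spec] : forall v, exists t,
    A v t /\ (v \in T -> slope vmax lam D (v, t) = 0).
  move=> v; have [vT|vT] := boolP (v \in T).
    by have [t Avt D0] := D_T0 v vT; exists t.
  by have [t Avt] := A_out v; exists t.
have tauA v : A v (tau v) by case: (tau_spec v).
exists tau => //; rewrite (bigD1 u0) //=.
have u0_lt0 : c u0 (tau u0) * slope vmax lam D (u0, tau u0) < 0.
  by rewrite pmulr_rlt0 ?c_gt0 ?D_u0.
have rest_le0 : \sum_(v | v != u0) c v (tau v) * slope vmax lam D (v, tau v) <= 0.
  apply: sumr_le0 => v _; have [vT|vT] := boolP (v \in T).
    by rewrite (tau_spec v).2 // mulr0.
  by rewrite pmulr_rle0 ?c_gt0 ?D_out.
lra.
Qed.

End Direction.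

Section Descent.
Variables (R : realFieldType) (V : finType) (vmax : pred V) (edge : rel V)
  (w lam alpha : V -> V -> R).

Local Notation offset := (offset vmax w lam).
Local Notation slope := (slope vmax lam).
Local Notation fobj := (fobj vmax w lam alpha).
Local Notation solvesH := (solvesH vmax edge w lam).
Local Notation basis_val := (basis_val vmax edge w lam).
Local Notation is_basis_valuation := (is_basis_valuation vmax edge w lam).
Local Notation minimises := (minimises vmax edge w lam).

Lemma offset_shift (x D : V -> R) t e :
  offset (fun v => x v + t * D v) e = offset x e + t * slope D e.
Proof. by rewrite /Defs.offset /slope; case: (vmax e.1); ring. Qed.

Lemma fobj_shift s (x D : V -> R) t :
  fobj s (fun v => x v + t * D v) =
  fobj s x + t * \sum_v alpha v (s v) * slope D (v, s v).
Proof.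
rewrite /Defs.fobj mulr_sumr -big_split /=; apply: eq_bigr => v _.
by rewrite /offset' offset_shift; ring.
Qed.

Lemma solvesH_shift (x D : V -> R) : solvesH x ->
  (forall e, e \in edges edge -> offset x e = 0 -> 0 <= slope D e) ->
  exists2 t, 0 < t & solvesH (fun v => x v + t * D v).
Proof.
move=> x_sol D_tight.
pose P e := (e \in edges edge) && (0 < offset x e).
have c_gt0 e : P e -> 0 < offset x e / (`|slope D e| + 1).
  by case/andP=> _ off_gt0; rewrite divr_gt0 // ltr_pwDr.
have [t t_gt0 t_le] := fin_pos_lower_bound c_gt0.
exists t => // e e_edge; rewrite offset_shift.
have := x_sol e e_edge; rewrite le0r => /orP[/eqP off0|off_gt0].
  by rewrite off0 add0r mulr_ge0 ?(ltW t_gt0) ?D_tight.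
have := t_le e; rewrite /P e_edge off_gt0 => /(_ isT).
rewrite ler_pdivlMr ?ltr_pwDr ?normr_ge0 // => t_bound.
have : - (t * `|slope D e|) <= t * slope D e.
  by rewrite -mulrN ler_wpM2l ?(ltW t_gt0) // lerNl -normrN ler_norm.
nra.
Qed.

Lemma not_minimises_of_descent s (x D : V -> R) : solvesH x ->
  (forall e, e \in edges edge -> offset x e = 0 -> 0 <= slope D e) ->
  \sum_v alpha v (s v) * slope D (v, s v) < 0 -> ~ minimises (fobj s) x.
Proof.
move=> x_sol D_tight sum_lt0 [_ x_min].
have [t t_gt0 y_sol] := solvesH_shift x_sol D_tight.
have := x_min _ y_sol; rewrite fobj_shift -subr_ge0 addrC addKr.
by rewrite pmulr_rge0 // leNgt sum_lt0.
Qed.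

Lemma untight_of_fobj_neq0 s (x : V -> R) :
  fobj s x != 0 -> exists u, offset x (u, s u) != 0.
Proof.
move=> f_neq0; apply/existsP; apply: contraNT f_neq0.
rewrite negb_exists => /forallP tight; apply/eqP/big1 => v _.
by move/negPn: (tight v) => /eqP off0; rewrite /offset' off0 mulr0.
Qed.

Lemma tight_edge_in_E' s (x : V -> R) (E' : {set V * V}) e :
  (forall v t, edge v t -> 0 < alpha v t) -> joint edge s ->
  Enu vmax edge w lam x \subset E' -> E' \subset Sset vmax edge w lam alpha s x ->
  e \in edges edge -> offset x e = 0 -> e \in E' /\ offset x (e.1, s e.1) = 0.
Proof.
move=> alpha_gt0 s_joint sub_E' sub_S e_edge off0.
have eE' : e \in E' by apply: (subsetP sub_E'); rewrite inE e_edge off0 eqxx.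
split=> //; move/(subsetP sub_S): eE'; rewrite inE /offset' off0 mulr0.
by case/andP=> _ /eqP/esym/eqP; rewrite mulf_eq0 gt_eqF ?alpha_gt0 //= => /eqP.
Qed.

Lemma fobj_eq_basis_val s B (x y : V -> R) :
  basis_val B x -> basis_val B y -> fobj s x = fobj s y.
Proof.
case=> [[_ _ _ uniq] Bx _] [_ By _].
by apply: eq_bigr => v _; rewrite /offset' /Defs.offset !(uniq _ _ Bx By).
Qed.

(* Termination measure for descent among basis valuations. *)
Definition lower_bases s (c : R) : {set {set V * V}} :=
  [set B | `[< exists2 z, basis_val B z & fobj s z < c >]].

Lemma lower_bases_proper s B' (x x' : V -> R) :
  basis_val B' x' -> fobj s x' < fobj s x ->
  lower_bases s (fobj s x') \proper lower_bases s (fobj s x).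
Proof.
move=> B'x' lt_x'x; apply/properP; split.
  apply/subsetP => B; rewrite !inE => /asboolP[z Bz lt_z].
  by apply/asboolP; exists z => //; apply: lt_trans lt_x'x.
exists B'; first by rewrite inE; apply/asboolP; exists x'.
rewrite inE; apply/asboolP => -[z B'z]; rewrite (fobj_eq_basis_val s B'z B'x').
by rewrite ltxx.
Qed.

Lemma exists_minimiser s x :
  improving vmax edge w lam alpha -> joint edge s -> is_basis_valuation x ->
  exists y, minimises (fobj s) y.
Proof.
move=> [_ improve] s_joint.
have [n] := ubnP #|lower_bases s (fobj s x)|.
elim: n x => // n IH x; rewrite ltnS => le_n x_bv.
have [x_min|x_nmin] := pselect (minimises (fobj s) x); first by exists x.
have [B [B' [x' [_ _ B'x' lt_x'x]]]] := improve s s_joint x x_bv x_nmin.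
apply: (IH x'); last by exists B'.
exact: leq_trans (proper_card (lower_bases_proper B'x' lt_x'x)) le_n.
Qed.

Lemma better_of_fobj_lt s s' (nu nu' : V -> R) :
  improving vmax edge w lam alpha -> joint edge s' -> is_basis_valuation nu ->
  minimises (fobj s) nu -> solvesH nu' -> fobj s' nu' < fobj s nu ->
  better vmax edge w lam alpha s' s.
Proof.
move=> improv s'_joint nu_bv nu_min nu'_sol lt_nu'.
have [x [x_sol x_min]] := exists_minimiser improv s'_joint nu_bv.
exists x, nu; split => //; apply: le_lt_trans lt_nu'; exact: x_min.
Qed.

End Descent.

Theorem theorem4p8 (R : realFieldType) (V : finType) (vmax : pred V)
  (edge : rel V) (w lam alpha : V -> V -> R)
  (Hout : forall v, exists v', edge v v')
  (Hlam : forall v v', edge v v' -> 0 <= lam v v' < 1)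
  (Halpha : forall v v', edge v v' -> 0 < alpha v v')
  (Himp : improving vmax edge w lam alpha)
  (s : V -> V) (Hs : joint edge s)
  (nu : V -> R)
  (Hnu : is_basis_valuation vmax edge w lam nu)
  (Hmin : minimises vmax edge w lam (fobj vmax w lam alpha s) nu)
  (Hnz : fobj vmax w lam alpha s nu != 0)
  (Hloc : forall v v', edge v v' ->
     offset' vmax w lam alpha nu (v, s v) <= offset' vmax w lam alpha nu (v, v'))
  (E' : {set V * V})
  (HE1 : Enu vmax edge w lam nu \subset E')
  (HE2 : E' \subset Sset vmax edge w lam alpha s nu)
  (HE3 : forall v, exists v', (v, v') \in E') :
  exists (nu'' : V -> R) (s' : V -> V),
    [/\ neighbour vmax edge w lam nu nu'', joint edge s',
        fobj vmax w lam alpha s' nu'' < fobj vmax w lam alpha s nu,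
        better vmax edge w lam alpha s' s &
        forall v, (v, s' v) \in E'].
Proof.
have E'_edge v t : (v, t) \in E' -> edge v t.
  by move/(subsetP HE2); rewrite /Sset /edges !inE => /andP[].
have E'_offset' v t : (v, t) \in E' ->
    offset' vmax w lam alpha nu (v, t) = offset' vmax w lam alpha nu (v, s v).
  by move/(subsetP HE2); rewrite /Sset inE => /andP[_ /eqP].
set T := [set v | offset vmax w lam nu (v, s v) == 0].
have [u uT] : exists u, u \notin T.
  by have [u u_untight] := untight_of_fobj_neq0 Hnz; exists u; rewrite inE.
have lam_unit v t : (v, t) \in E' -> 0 <= lam v t < 1 by move/E'_edge/Hlam.
have [D [D_T D_T0 D_out D_u]] :=
  descent_direction vmax lam_unit HE3 (ex_intro _ u uT).
have [tau tauE' sum_lt0] :=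
  descent_strategy HE3 (fun v t vt => Halpha v t (E'_edge v t vt)) D_T0 D_out D_u.
have tau_joint : joint edge tau by move=> v; exact: E'_edge (tauE' v).
have f_tau_nu : fobj vmax w lam alpha tau nu = fobj vmax w lam alpha s nu.
  by apply: eq_bigr => v _; rewrite E'_offset'.
have D_tight e : e \in edges edge -> offset vmax w lam nu e = 0 ->
    0 <= slope vmax lam D e.
  move=> e_edge /(tight_edge_in_E' Halpha Hs HE1 HE2 e_edge).
  by case: e {e_edge} => v t [vtE' sv_tight]; apply: D_T vtE'; rewrite inE sv_tight.
have [B [B' [nu'' [nuB BB' nu''B' lt_f]]]] := Himp.2 tau tau_joint nu Hnu
  (not_minimises_of_descent Hmin.1 D_tight sum_lt0).
exists nu'', tau; rewrite -f_tau_nu; split => //; first by exists B, B'.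
apply: (better_of_fobj_lt (nu' := nu'') Himp tau_joint Hnu Hmin).
  by case: nu''B'.
by rewrite -f_tau_nu.
Qed.
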